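(* Let $\gamma>0$. For each $n\in\mathbb{N}$ and $j=0,\dots,n$ let $a(n,j)\in(0,1)$ and $b(n,j)>0$, and suppose $$\lim_{n\to\infty}\frac{\log b(n,j)}{\log a(n,j)}=\gamma$$ uniformly in $j$ (i.e. for every $\varepsilon>0$ there is $n_0$ with $|\log b(n,j)/\log a(n,j)-\gamma|<\varepsilon$ for all $n\ge n_0$ and all $j=0,\dots,n$). Define $A_k(n)=\prod_{j=k}^n a(n,j)$ and $B_k(n)=\prod_{j=k}^n b(n,j)$. Then $\lim_{n\to\infty}\big(A_k(n)^\gamma-B_k(n)\big)=0$ uniformly in $k\in\{0,\dots,n\}$. *)

From Stdlib Require Import Reals Lra Lia.
Open Scope R_scope.

(* prod_from_to f k n = f k * f (k+1) * ... * f n  (empty product 1 if k > n). *)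
Fixpoint prod_len (f : nat -> R) (k m : nat) : R :=
  match m with
  | O => 1
  | S m' => f k * prod_len f (S k) m'
  end.

Definition prod_from_to (f : nat -> R) (k n : nat) : R :=
  prod_len f k (S n - k).

From Stdlib Require Import Reals.
From Stdlib Require Import Lra Lia.
Open Scope R_scope.

(* Write L_j = ln a(n,j) < 0 and M_j = ln b(n,j).  The hypothesis
   |M_j / L_j - gamma| < e says that the pair (L_j, M_j) lies in the cone
     C(gamma, e) = { (S, T) | S <= 0  and  |T - gamma S| <= - e S },
   and this cone is closed under addition.  Hence S = ln A_k(n) and
   T = ln B_k(n), being sums of such pairs, also lie in C(gamma, e), while
   A_k(n)^gamma = exp (gamma S) and B_k(n) = exp T.  Finally, for (S, T) in the
   cone with e <= gamma / 2, both exponents are <= gamma S / 2 <= 0, so the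
   mean value bound |exp u - exp v| <= exp (max u v) |u - v| together with
   x exp (-x) <= 1 gives |exp (gamma S) - exp T| <= 2 e / gamma, uniformly in
   S. *)

(* Convexity of exp below a point: the chord slope is at most exp u. *)
Lemma exp_sub_le (u v : R) : v <= u -> exp u - exp v <= exp u * (u - v).
Proof.
  intros Hvu.
  assert (Hsplit : exp v = exp u * exp (v - u)).
  { rewrite <- exp_plus. f_equal. ring. }
  pose proof (exp_ineq1_le (v - u)). pose proof (exp_pos u). nra.
Qed.

Lemma Rabs_exp_sub_le (u v c : R) : u <= c -> v <= c ->
  Rabs (exp u - exp v) <= exp c * Rabs (u - v).
Proof.
  assert (Hmono : forall x y, x <= y -> exp x <= exp y).
  { intros x y [Hxy | ->]; [left; apply exp_increasing | right]; auto. }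
  intros Hu Hv.
  destruct (Rle_dec v u) as [Hvu | Huv].
  - pose proof (exp_sub_le u v Hvu). pose proof (Hmono _ _ Hvu).
    pose proof (Hmono _ _ Hu). pose proof (exp_pos u).
    rewrite Rabs_right, (Rabs_right (u - v)) by lra. nra.
  - assert (Huv' : u <= v) by lra.
    pose proof (exp_sub_le v u Huv'). pose proof (Hmono _ _ Huv').
    pose proof (Hmono _ _ Hv). pose proof (exp_pos v).
    rewrite Rabs_left1, (Rabs_left1 (u - v)) by lra. nra.
Qed.

(* x exp (-x) <= 1 for x >= 0, a consequence of 1 + x <= exp x. *)
Lemma mul_exp_opp_le_1 (x : R) : 0 <= x -> x * exp (- x) <= 1.
Proof.
  intros Hx.
  assert (Hinv : exp x * exp (- x) = 1).
  { rewrite <- exp_plus. replace (x + - x) with 0 by ring. apply exp_0. }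
  pose proof (exp_ineq1_le x). pose proof (exp_pos (- x)). nra.
Qed.

Definition in_cone (g e S T : R) : Prop :=
  S <= 0 /\ Rabs (T - g * S) <= - e * S.

Lemma exp_close_in_cone (g e S T : R) : 0 < g -> 0 < e -> e <= g / 2 ->
  in_cone g e S T -> Rabs (exp (g * S) - exp T) <= 2 * e / g.
Proof.
  intros Hg He Heg [HS HT].
  pose proof (Rle_abs (T - g * S)) as HT'.
  set (x := - g * S / 2).
  assert (Hx : 0 <= x) by (unfold x; nra).
  assert (Hc1 : g * S <= - x) by (unfold x; nra).
  assert (Hc2 : T <= - x) by (unfold x; nra).
  pose proof (Rabs_exp_sub_le (g * S) T (- x) Hc1 Hc2) as Hlip.
  rewrite (Rabs_minus_sym (g * S) T) in Hlip.
  assert (Hdist : - e * S = 2 * e / g * x) by (unfold x; field; lra).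
  assert (Hfac : 0 <= 2 * e / g)
    by (apply Rmult_le_pos; [lra | apply Rlt_le, Rinv_0_lt_compat; lra]).
  pose proof (mul_exp_opp_le_1 x Hx). pose proof (exp_pos (- x)).
  assert (Hprod : exp (- x) * Rabs (T - g * S) <= exp (- x) * (2 * e / g * x))
    by (apply Rmult_le_compat_l; lra).
  assert (Hfin : exp (- x) * (2 * e / g * x) <= 2 * e / g).
  { replace (exp (- x) * (2 * e / g * x)) with (2 * e / g * (x * exp (- x))) by ring.
    rewrite <- (Rmult_1_r (2 * e / g)) at 2. apply Rmult_le_compat_l; lra. }
  lra.
Qed.

Lemma ln_pair_in_cone (g e a b : R) : 0 < a < 1 -> 0 < b ->
  Rabs (ln b / ln a - g) < e -> in_cone g e (ln a) (ln b).
Proof.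
  intros Ha Hb Hratio.
  assert (HL : ln a < 0) by (rewrite <- ln_1; apply ln_increasing; lra).
  split; [lra |].
  replace (ln b - g * ln a) with (ln a * (ln b / ln a - g)) by (field; lra).
  rewrite Rabs_mult, Rabs_left by lra. nra.
Qed.

Lemma in_cone_add (g e S1 T1 S2 T2 : R) :
  in_cone g e S1 T1 -> in_cone g e S2 T2 -> in_cone g e (S1 + S2) (T1 + T2).
Proof.
  intros [HS1 HT1] [HS2 HT2]. split; [lra |].
  replace (T1 + T2 - g * (S1 + S2)) with ((T1 - g * S1) + (T2 - g * S2)) by ring.
  pose proof (Rabs_triang (T1 - g * S1) (T2 - g * S2)). lra.
Qed.

Fixpoint sum_len (f : nat -> R) (k m : nat) : R :=
  match m with
  | O => 0
  | S m' => f k + sum_len f (S k) m'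
  end.

Lemma sum_len_in_cone (g e : R) (L M : nat -> R) (m : nat) : forall k,
  (forall j, (k <= j < k + m)%nat -> in_cone g e (L j) (M j)) ->
  in_cone g e (sum_len L k m) (sum_len M k m).
Proof.
  induction m as [| m IH]; intros k Hterm; simpl.
  - split; [lra |]. rewrite Rmult_0_r, Rminus_0_r, Rabs_R0. lra.
  - apply in_cone_add; [apply Hterm; lia |].
    apply IH. intros j Hj. apply Hterm. lia.
Qed.

Lemma prod_len_exp_sum_ln (f : nat -> R) (m : nat) : forall k,
  (forall j, (k <= j < k + m)%nat -> 0 < f j) ->
  prod_len f k m = exp (sum_len (fun j => ln (f j)) k m).
Proof.
  induction m as [| m IH]; intros k Hpos; simpl.
  - now rewrite exp_0.
  - rewrite exp_plus, exp_ln by (apply Hpos; lia).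
    rewrite IH; [reflexivity |]. intros j Hj. apply Hpos. lia.
Qed.

Theorem mainTheorem17 (gamma : R) (a b : nat -> nat -> R)
  (hgamma : 0 < gamma)
  (ha : forall n j : nat, (j <= n)%nat -> 0 < a n j < 1)
  (hb : forall n j : nat, (j <= n)%nat -> 0 < b n j)
  (hlim : forall eps : R, 0 < eps -> exists n0 : nat,
      forall n j : nat, (n0 <= n)%nat -> (j <= n)%nat ->
        Rabs (ln (b n j) / ln (a n j) - gamma) < eps) :
  forall eps : R, 0 < eps -> exists N : nat,
    forall n k : nat, (N <= n)%nat -> (k <= n)%nat ->
      Rabs (Rpower (prod_from_to (a n) k n) gamma - prod_from_to (b n) k n) < eps.
Proof.
  intros eps Heps.
  set (e := Rmin (gamma / 2) (eps * gamma / 4)).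
  assert (He : 0 < e) by (unfold e; apply Rmin_pos; nra).
  destruct (hlim e He) as [n0 Hn0].
  exists n0. intros n k Hn Hk.
  set (S := sum_len (fun j => ln (a n j)) k (Datatypes.S n - k)).
  set (T := sum_len (fun j => ln (b n j)) k (Datatypes.S n - k)).
  assert (Hcone : in_cone gamma e S T).
  { apply sum_len_in_cone. intros j Hj.
    apply ln_pair_in_cone; [apply ha | apply hb | apply Hn0]; lia. }
  assert (HA : prod_from_to (a n) k n = exp S).
  { apply prod_len_exp_sum_ln. intros j Hj. apply ha. lia. }
  assert (HB : prod_from_to (b n) k n = exp T).
  { apply prod_len_exp_sum_ln. intros j Hj. apply hb. lia. }
  rewrite HA, HB. unfold Rpower. rewrite ln_exp.
  pose proof (exp_close_in_cone gamma e S T hgamma He (Rmin_l _ _) Hcone).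
  assert (2 * e / gamma <= eps / 2).
  { assert (Heps_e : e <= eps * gamma / 4) by apply Rmin_r.
    apply (Rmult_le_reg_r gamma); [lra |]. field_simplify; lra. }
  lra.
Qed.
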